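(* Let $p\ge5$ be prime. Then $D^pP$ is a modular form mod $p$; that is, the image of $D^pP\in\mathbb{Z}_{(p)}[P,Q,R]$ in $(\mathbb{Z}/p\mathbb{Z})[P,Q,R]$ lies in $(\mathbb{Z}/p\mathbb{Z})[Q,R]$.
   Context: $\mathbb{Z}_{(p)}$ is the localization of $\mathbb{Z}$ at $p$. $P=E_2,Q=E_4,R=E_6$ are the normalized Eisenstein series, viewed as independent variables. $D=q\frac{d}{dq}$ acts on $\mathbb{Z}_{(p)}[P,Q,R]$ as the derivation with $DP=\frac{P^2-Q}{12}$, $DQ=\frac{PQ-R}{3}$, $DR=\frac{PR-Q^2}{2}$. *)

From mathcomp Require Import all_boot all_algebra.
From mathcomp Require Import mpoly.
Set Implicit Arguments. Unset Strict Implicit. Unset Printing Implicit Defensive.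
Import GRing.Theory Num.Theory.
Local Open Scope ring_scope.

(* Polynomials in P = 'X_0, Q = 'X_1, R = 'X_2 with rational coefficients;
   Z_(p)[P,Q,R] is the subring of those with p-integral coefficients. *)
Notation QPQR := {mpoly rat[3]}.

Definition vP : QPQR := 'X_(@Ordinal 3 0 isT).
Definition vQ : QPQR := 'X_(@Ordinal 3 1 isT).
Definition vR : QPQR := 'X_(@Ordinal 3 2 isT).

(* The Ramanujan derivation D = q d/dq :
   DP = (P^2 - Q)/12, DQ = (PQ - R)/3, DR = (PR - Q^2)/2. *)
Definition Dop (F : QPQR) : QPQR :=
  F^`M(@Ordinal 3 0 isT) * ((12%:R)^-1 *: (vP ^+ 2 - vQ))
  + F^`M(@Ordinal 3 1 isT) * ((3%:R)^-1 *: (vP * vQ - vR))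
  + F^`M(@Ordinal 3 2 isT) * ((2%:R)^-1 *: (vP * vR - vQ ^+ 2)).

Definition p_integral (p : nat) (x : rat) : bool := ~~ (p%:Z %| denq x)%Z.

(* reduction Z_(p) -> Z/pZ (meaningful on p-integral rationals) *)
Definition redp (p : nat) (x : rat) : 'F_p :=
  (numq x)%:~R / (denq x)%:~R.

Definition in_Zp_poly (p : nat) (F : QPQR) : Prop :=
  forall m : 'X_{1..3}, p_integral p F@_m.

Definition image_in_FpQR (p : nat) (F : QPQR) : Prop :=
  forall m : 'X_{1..3}, (0 < m (@Ordinal 3 0 isT))%N ->
    (map_mpoly (redp p) F)@_m = 0.

From HB Require Import structures.
From mathcomp Require Import all_boot all_algebra.
From mathcomp Require Import mpoly.
From mathcomp Require Import ring zify.
Set Implicit Arguments. Unset Strict Implicit. Unset Printing Implicit Defensive.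
Import GRing.Theory Num.Theory.
Local Open Scope ring_scope.

(* Work with D12 = 12 D, which is defined over the integers, and with the
   weight operator Ew = 2P d/dP + 4Q d/dQ + 6R d/dR.  The commutation rules
   [d/dP, D12] = Ew and [Ew, D12] = 2 D12 give
   d/dP (D12^p P) = p (p + 1) D12^(p-1) P, so the coefficient c_m of every
   monomial m of D12^p P satisfies m_P c_m = 0 mod p.  As D12^p P is
   homogeneous of weight 2p + 2, no monomial with 0 < m_P divisible by p
   occurs, hence p | c_m whenever 0 < m_P.  Finally D^p P = 12^-p D12^p P and
   p does not divide 12. *)

Local Notation iP := (@Ordinal 3 0 isT).
Local Notation iQ := (@Ordinal 3 1 isT).
Local Notation iR := (@Ordinal 3 2 isT).

Lemma mderiv_mpolyX1 (R : nzRingType) n (i j : 'I_n) :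
  ('X_i : {mpoly R[n]})^`M(j) = (i == j)%:R.
Proof.
rewrite mderivX mnm1E; case: eqP => [->|_]; last by rewrite scale0r.
rewrite (_ : U_(j) - U_(j) = 0)%MM ?mpolyX0 ?scale1r //.
by apply/mnmP=> k; rewrite !mnmE subnn.
Qed.

Lemma map_mpoly_mderiv (R S : nzRingType) n (f : {additive R -> S}) i
    (F : {mpoly R[n]}) :
  map_mpoly f F^`M(i) = (map_mpoly f F)^`M(i).
Proof.
apply/mpolyP => m.
by rewrite mcoeff_map_mpoly !mcoeff_deriv mcoeff_map_mpoly raddfMn.
Qed.

Lemma mcoeff_map_mpoly0 (R S : nzRingType) n (f : R -> S) (F : {mpoly R[n]}) m :
  f 0 = 0 -> (map_mpoly f F)@_m = f F@_m.
Proof.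
move=> f0; rewrite /map_mpoly /mmap raddf_sum /=.
under eq_bigr => k _ do rewrite mmap1_id mcoeffCM mcoeffX.
have [mF|mNF] := boolP (m \in msupp F).
  rewrite (bigD1_seq m) ?msupp_uniq //= eqxx mulr1 big1 ?addr0 //.
  by move=> k /negbTE ->; rewrite mulr0.
rewrite big1_seq; last first.
  by move=> k /andP[_ kF]; case: eqP kF mNF => [-> ->|]; rewrite ?mulr0.
by move: mNF; rewrite mcoeff_msupp negbK => /eqP ->.
Qed.

Lemma mcoeff_mderivMX (R : nzRingType) n (i : 'I_n) (F : {mpoly R[n]}) m :
  (F^`M(i) * 'X_i)@_m = F@_m *+ m i.
Proof.
have [mi0|mi_gt0] := posnP (m i).
  rewrite mi0 mulr0n; elim/mpolyind: (F^`M(i)) => [|c k G _ _ IH].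
    by rewrite mul0r mcoeff0.
  rewrite mulrDl mcoeffD IH addr0 -scalerAl mcoeffZ -mpolyXD mcoeffX.
  case: eqP => [em|_]; last by rewrite mulr0.
  by rewrite -em mnmDE mnm1E eqxx addn1 in mi0.
have {1}-> : m = (U_(i) + (m - U_(i)))%MM by rewrite addmC submK // lep1mP -lt0n.
rewrite mcoeffMX mcoeff_deriv submK ?lep1mP -?lt0n //.
by rewrite mnmBE mnm1E eqxx subn1 prednK.
Qed.

Section RamanujanDerivation.
Variable S : comNzRingType.
Local Notation MP := {mpoly S[3]}.
Local Notation P := ('X_iP : MP).
Local Notation Q := ('X_iQ : MP).
Local Notation R := ('X_iR : MP).

Definition D12 (F : MP) : MP :=
  F^`M(iP) * (P ^+ 2 - Q) + F^`M(iQ) * ((P * Q - R) *+ 4)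
  + F^`M(iR) * ((P * R - Q ^+ 2) *+ 6).

Lemma D12_is_linear : linear D12.
Proof.
move=> c F G; rewrite /D12 !linearP /= !mulrDl -!scalerAl !scalerDr.
by rewrite [RHS]addrACA [X in _ = X + _]addrACA.
Qed.

HB.instance Definition _ :=
  GRing.isLinear.Build S MP MP *:%R D12 D12_is_linear.

Definition Ew (F : MP) : MP :=
  F^`M(iP) * (P *+ 2) + F^`M(iQ) * (Q *+ 4) + F^`M(iR) * (R *+ 6).

Definition mweight (m : 'X_{1..3}) : nat := 2 * m iP + 4 * m iQ + 6 * m iR.

Lemma mcoeff_Ew F m : (Ew F)@_m = F@_m *+ mweight m.
Proof.
rewrite /Ew !mulrnAr 2!mcoeffD !mcoeffMn !mcoeff_mderivMX -!mulrnA -!mulrnDr.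
by rewrite /mweight (mulnC 2) (mulnC 4) (mulnC 6).
Qed.

Lemma mderivP_D12 F : (D12 F)^`M(iP) = D12 F^`M(iP) + Ew F.
Proof.
rewrite /D12 /Ew !expr2 !(mderivD, mderivM, mderivB, mderivMn, mderivN).
by rewrite !(mderiv_comm _ iP) !mderiv_mpolyX1 /=; ring.
Qed.

Lemma Ew_D12 F : Ew (D12 F) = D12 (Ew F) + D12 F *+ 2.
Proof.
rewrite /D12 /Ew !expr2 !(mderivD, mderivM, mderivB, mderivMn, mderivN).
rewrite !mderiv_mpolyX1 /=.
rewrite (mderiv_comm iP iQ F) (mderiv_comm iP iR F) (mderiv_comm iQ iR F).
ring.
Qed.

Lemma Ew_iter_D12 n : Ew (iter n D12 P) = iter n D12 P *+ (2 * n + 2).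
Proof.
elim: n => [|n IH]; first by rewrite /Ew !mderiv_mpolyX1 /=; ring.
by rewrite iterS Ew_D12 IH raddfMn -mulrnDr; congr (_ *+ _); lia.
Qed.

Lemma D12C c : D12 c%:MP = 0.
Proof. by rewrite /D12 !mderivC !mul0r !addr0. Qed.

Lemma mderivP_iter_D12 n :
  (iter n.+1 D12 P)^`M(iP) = iter n D12 P *+ (n.+1 * n.+2).
Proof.
elim: n => [|n IH].
  by rewrite mderivP_D12 mderiv_mpolyX1 -mpolyC1 D12C add0r (Ew_iter_D12 0).
rewrite iterS mderivP_D12 IH raddfMn Ew_iter_D12 -iterS -mulrnDr.
by congr (_ *+ _); lia.
Qed.

End RamanujanDerivation.
Arguments D12 {S}.

Section IntegralCoefficients.
Local Notation G n := (iter n D12 ('X_iP : {mpoly int[3]})).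

Lemma mweight_iter_D12 n m : (G n)@_m != 0 -> mweight m = (2 * n + 2)%N.
Proof.
by move=> nz; apply: (mulrIn nz); rewrite -mcoeff_Ew Ew_iter_D12 mcoeffMn.
Qed.

Lemma mweight_neq p (m : 'X_{1..3}) :
  (1 < p)%N -> (p %| m iP)%N -> (0 < m iP)%N -> mweight m != (2 * p + 2)%N.
Proof.
rewrite /mweight => p_gt1 /dvdnP[k ->]; move: (m iQ) (m iR) => b c.
by case: k => [|[|k]]; rewrite ?mul0n ?mul1n ?mulSn; lia.
Qed.

Lemma dvdn_mcoeff_iter_D12 p (m : 'X_{1..3}) :
  prime p -> (0 < m iP)%N -> (p %| `|(G p)@_m|)%N.
Proof.
move=> p_pr m0.
have [n def_p] : exists n, p = n.+1 by exists p.-1; rewrite prednK ?prime_gt0.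
have coef_eq : (G p)@_m *+ m iP = (G n)@_(m - U_(iP)) *+ (n.+1 * n.+2).
  rewrite -[RHS]mcoeffMn -mderivP_iter_D12 -def_p mcoeff_deriv.
  rewrite submK ?lep1mP -?lt0n //.
  by rewrite mnmBE mnm1E eqxx subn1 prednK.
have : (p %| `|(G p)@_m| * m iP)%N.
  have := congr1 absz coef_eq.
  rewrite -[_ *+ m iP]mulr_natr -[_ *+ (_ * _)]mulr_natr.
  rewrite !abszM !natz !absz_nat => ->.
  by rewrite def_p dvdn_mull // dvdn_mulr.
rewrite Euclid_dvdM // => /orP[//|p_m0].
have [->//|nz] := eqVneq (G p)@_m 0.
have := mweight_neq (prime_gt1 p_pr) p_m0 m0.
by rewrite (mweight_iter_D12 nz) eqxx.
Qed.

End IntegralCoefficients.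

Lemma map_mpoly_D12 (R S : comNzRingType) (f : {rmorphism R -> S})
    (F : {mpoly R[3]}) :
  map_mpoly f (D12 F) = D12 (map_mpoly f F).
Proof.
rewrite /D12 !rmorphD !rmorphM !rmorphMn !rmorphB !rmorphXn !rmorphM /=.
by rewrite !map_mpolyX !map_mpoly_mderiv.
Qed.

Lemma Dop_D12 (F : QPQR) : Dop F = 12%:R^-1 *: D12 F.
Proof.
rewrite /Dop /D12 (_ : 3%:R^-1 = 12%:R^-1 *+ 4) //.
rewrite (_ : 2%:R^-1 = 12%:R^-1 *+ 6) //.
rewrite -!mul_mpolyC !rmorphMn /vP /vQ /vR /=.
by move: (12%:R^-1 : rat)%:MP => c; ring.
Qed.

Lemma iter_Dop_vP n :
  iter n Dop vP =
  12%:R^-1 ^+ n *: map_mpoly intr (iter n D12 ('X_iP : {mpoly int[3]})).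
Proof.
elim: n => [|n IH]; first by rewrite scale1r map_mpolyX.
by rewrite iterS IH Dop_D12 linearZ scalerA -exprS iterS map_mpoly_D12.
Qed.

Section PIntegralQuotient.
Variables (p d : nat) (z : int) (x : rat).
Hypotheses (p_pr : prime p) (p_ndvd_d : ~~ (p %| d)%N) (xd : x * d%:R = z%:~R).

Let numq_mul_eq : (`|numq x| * d = `|z| * `|denq x|)%N.
Proof.
have : numq x * d%:Z = z * denq x.
  by apply: (@intr_inj rat); rewrite !rmorphM /= numqE mulrAC -xd.
by move/(congr1 absz); rewrite !abszM.
Qed.

Lemma p_integral_of_mul : p_integral p x.
Proof.
rewrite /p_integral dvdzE; apply/negP => p_den.
have : (p %| `|numq x| * d)%N by rewrite numq_mul_eq dvdn_mull.
rewrite Euclid_dvdM // (negbTE p_ndvd_d) orbF => p_num.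
have := coprime_num_den x; rewrite /coprime => /eqP gcd1.
have : (p %| gcdn `|numq x| `|denq x|)%N by rewrite dvdn_gcd p_num.
rewrite gcd1 dvdn1 => /eqP p1.
by have := prime_gt1 p_pr; rewrite p1.
Qed.

Lemma redp_eq0_of_mul : (p %| `|z|)%N -> redp p x = 0.
Proof.
move=> p_z; have : (p %| `|numq x| * d)%N by rewrite numq_mul_eq dvdn_mulr.
rewrite Euclid_dvdM // (negbTE p_ndvd_d) orbF => p_num.
rewrite /redp; have /dvdzP[k ->] : (p%:Z %| numq x)%Z by rewrite dvdzE.
by rewrite intrM (_ : (p%:Z)%:~R = p%:R :> 'F_p) // pchar_Fp_0 // mulr0 mul0r.
Qed.

End PIntegralQuotient.

Lemma prime_ge5_ndvdn_exp12 p n : prime p -> (5 <= p)%N -> ~~ (p %| 12 ^ n)%N.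
Proof.
move=> p_pr p_ge5; rewrite Euclid_dvdX //; apply/negP => /andP[p_12 _].
have : p \in primes 12 by rewrite mem_primes p_pr p_12.
by rewrite (_ : primes 12 = [:: 2; 3]%N) // !inE => /orP[] /eqP; lia.
Qed.

Theorem proposition3p7 (p : nat) (hp : prime p) (hp5 : (5 <= p)%N) :
  in_Zp_poly p (iter p Dop vP) /\ image_in_FpQR p (iter p Dop vP).
Proof.
pose G := iter p D12 ('X_iP : {mpoly int[3]}).
have coefE m : (iter p Dop vP)@_m * (12 ^ p)%:R = (G@_m)%:~R.
  rewrite iter_Dop_vP mcoeffZ mcoeff_map_mpoly natrX mulrAC -exprMn mulVf //.
  by rewrite expr1n mul1r.
have p_ndvd := prime_ge5_ndvdn_exp12 p hp hp5.
split=> [m | m m0]; first exact: p_integral_of_mul (coefE m).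
rewrite mcoeff_map_mpoly0; last by rewrite /redp mul0r.
exact: redp_eq0_of_mul (coefE m) (dvdn_mcoeff_iter_D12 hp m0).
Qed.
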